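(* Let $r=r(n)$ satisfy $r/n^{1/3}\to\infty$ and $r=o(n^{2/3})$. Then $\Pr(\mathcal B_3)=o(1)$ as $n\to\infty$, where $\mathcal B_3$ is the event that at least three edges are chosen and $e_1\cap e_2\cap e_3\neq\emptyset$.
   Context: Random intersecting process: Let $[n]=\{1,\dots,n\}$ and $\binom{[n]}{r}$ the family of $r$-subsets of $[n]$. Choose $e_1$ uniformly at random from $\binom{[n]}{r}$. Given $\mathcal F_i=\{e_1,\dots,e_i\}$, let $\mathcal A(\mathcal F_i)=\{e\in\binom{[n]}{r}: e\notin\mathcal F_i,\ e\cap e_j\neq\emptyset \text{ for all } 1\le j\le i\}$, and choose $e_{i+1}$ uniformly at random from $\mathcal A(\mathcal F_i)$. The process halts when $\mathcal A(\mathcal F_i)=\emptyset$. *)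

From mathcomp Require Import all_boot.
From Stdlib Require Import Reals.

Set Implicit Arguments.
Unset Strict Implicit.
Unset Printing Implicit Defensive.

Definition rsets (n r : nat) : seq {set 'I_n} :=
  enum [pred A : {set 'I_n} | #|A| == r].

Definition avail (n r : nat) (F : seq {set 'I_n}) : seq {set 'I_n} :=
  [seq e <- rsets n r | (e \notin F) && all (fun f : {set 'I_n} => e :&: f != set0) F].

Definition sumR {T : Type} (l : seq T) (f : T -> R) : R :=
  foldr (fun x acc => (f x + acc)%R) 0%R l.

(* Probability of B_3: e1 uniform in binom([n],r), e2 uniform in A({e1}),
   e3 uniform in A({e1,e2}) (so at least three edges are chosen), and
   e1 ∩ e2 ∩ e3 nonempty.  Branches where the process halts earlier
   contribute 0 (empty sums). *)
Definition probB3 (n r : nat) : R :=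
  sumR (rsets n r) (fun e1 =>
    (/ INR (size (rsets n r)) *
     sumR (avail r [:: e1]) (fun e2 =>
       / INR (size (avail r [:: e1])) *
       sumR (avail r [:: e1; e2]) (fun e3 =>
         / INR (size (avail r [:: e1; e2])) *
         (if e1 :&: e2 :&: e3 != set0 then 1 else 0))))%R).

(* Given [e1] and [e2] with overlap [k = #|e1 :&: e2|], at most
   [k * 'C(n.-1, r.-1)] admissible [e3] meet [e1 :&: e2], while for [k <= r/2]
   the [r]-sets meeting both [e1 :\: e2] and [e2 :\: e1] are admissible and
   numerous: so the conditional probability of [B_3] is at most [k * h] with
   [h = O(n / r^3)] if [r^2 <= 8 n] and [h = O(r / n)] otherwise; for
   [k > r/2] the trivial bound [1 <= 2 k / r] is used.  Averaging over [e2],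
   [E[k | e1] <= r * 'C(n.-1, r.-1) / #|A(e1)|], which is [O(1)] resp.
   [O(r^2 / n)].  Hence [Pr(B_3) = O(1/r + n/r^3 + r/n + r^3/n^2)], which tends
   to 0 when [n^(1/3) << r << n^(2/3)].  The binomial ratios are controlled by
   [(n / (n - 3 r))^r <= e^48] in the first regime, and by
   [(1 - a/n)^r <= e^(-4) < 1/5] when [4 n <= r a] in the second. *)

From mathcomp Require Import all_boot.
From Stdlib Require Import Reals Lra Lia.
From mathcomp Require Import zify.
From Coquelicot Require Import Rcomplements.
Import ssrnat.
Local Open Scope nat_scope.

Set Implicit Arguments.
Unset Strict Implicit.
Unset Printing Implicit Defensive.

Lemma sumR_le {T : eqType} (l : seq T) f g :
  (forall x, x \in l -> (f x <= g x)%R) -> (sumR l f <= sumR l g)%R.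
Proof.
elim: l => [|a l IH] H /=; first lra.
have := H a (mem_head _ _); have := IH (fun x hx => H x (mem_behead (s:=a::l) hx)).
lra.
Qed.

Lemma sumR_mull {T} (l : seq T) c f :
  sumR l (fun x => c * f x)%R = (c * sumR l f)%R.
Proof. by elim: l => [|a l IH] /=; rewrite ?IH; ring. Qed.

Lemma sumR_const {T} (l : seq T) c : sumR l (fun _ => c) = (INR (size l) * c)%R.
Proof.
elim: l => [|a l IH]; first by rewrite /=; ring.
by rewrite [size _]/= S_INR [sumR _ _]/= IH; ring.
Qed.

Lemma sumR_ge0 {T : eqType} (l : seq T) f :
  (forall x, x \in l -> (0 <= f x)%R) -> (0 <= sumR l f)%R.
Proof. by move=> H; have := @sumR_le _ l (fun _ => 0%R) f H; rewrite sumR_const Rmult_0_r. Qed.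

Lemma sumR_INR {T} (l : seq T) (g : T -> nat) :
  sumR l (fun x => INR (g x)) = INR (\sum_(x <- l) g x).
Proof. by elim: l => [|a l IH] /=; rewrite ?big_nil // big_cons IH plus_INR. Qed.

Lemma sumR_indicator {T} (l : seq T) (p : pred T) :
  sumR l (fun x => if p x then 1 else 0)%R = INR (count p l).
Proof. by elim: l => [|a l IH] //=; rewrite IH plus_INR; case: (p a) => /=; ring. Qed.

Lemma INR_leq (m n : nat) : m <= n -> (INR m <= INR n)%R.
Proof. by move/leP; apply: le_INR. Qed.

Lemma INR_expn (m e : nat) : INR (m ^ e) = (INR m ^ e)%R.
Proof. by elim: e => [|e IH] //; rewrite expnS mult_INR IH. Qed.

Lemma INR_gt0 (m : nat) : 0 < m -> (0 < INR m)%R.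
Proof. by move/ltP; apply: lt_0_INR. Qed.

Lemma Rinv_INR_ge0 (m : nat) : (0 <= / INR m)%R.
Proof.
case: m => [|m]; first by rewrite Rinv_0; lra.
by apply/Rlt_le/Rinv_0_lt_compat/INR_gt0.
Qed.

(* Also for [l = [::]], where [/ INR 0 = 0]. *)
Lemma avg_le1 {T} (l : seq T) (k : nat) : k <= size l -> (/ INR (size l) * INR k <= 1)%R.
Proof.
move=> hk; case: (posnP (size l)) => [->|hp]; first by rewrite Rinv_0; lra.
rewrite Rmult_comm -Rdiv_le_1; [exact: INR_leq | exact: INR_gt0].
Qed.

Lemma bin_ffact_ratio_le (M m j : nat) : j <= m -> m <= M ->
  'C(M, j) * (m - j) ^ j <= 'C(m, j) * M ^ j.
Proof.
move=> hjm hmM; rewrite -(@leq_pmul2r j`!) ?fact_gt0 //.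
rewrite mulnAC [X in _ <= X]mulnAC !bin_ffact.
suff: forall i, i <= j -> M ^_ i * (m - j) ^ i <= m ^_ i * M ^ i by apply.
elim=> [|i IH] hi; first by rewrite !ffactn0 !expn0.
rewrite !ffactnSr !expnSr mulnACA [X in _ <= X]mulnACA.
by apply: leq_mul; [exact: IH (ltnW hi) | nia].
Qed.

Lemma bin_ffact_ratio_ge (M m j : nat) : m <= M ->
  'C(m, j) * M ^ j <= 'C(M, j) * m ^ j.
Proof.
move=> hmM; rewrite -(@leq_pmul2r j`!) ?fact_gt0 //.
rewrite mulnAC [X in _ <= X]mulnAC !bin_ffact.
elim: j => [|i IH]; first by rewrite !ffactn0 !expn0.
rewrite !ffactnSr !expnSr mulnACA [X in _ <= X]mulnACA.
by apply: leq_mul => //; nia.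
Qed.

Lemma exp_le_exp (x y : R) : (x <= y)%R -> (exp x <= exp y)%R.
Proof. by case/Rle_lt_or_eq_dec => [/exp_increasing|->]; lra. Qed.

Lemma pow_le_exp (x : R) (k : nat) :
  (0 <= 1 + x)%R -> ((1 + x) ^ k <= exp (INR k * x))%R.
Proof.
move=> hx; elim: k => [|k IH]; first by rewrite /= Rmult_0_l exp_0; lra.
rewrite S_INR Rmult_plus_distr_r Rmult_1_l exp_plus [(_ ^ k.+1)%R]/= Rmult_comm.
by apply: Rmult_le_compat => //; [exact: pow_le | exact: exp_ineq1_le].
Qed.

Lemma leq_expn2r (m n e : nat) : m <= n -> m ^ e <= n ^ e.
Proof. by case: e => [|e] // hmn; rewrite leq_exp2r. Qed.

Lemma bin_le_ratio_pow (M m j N d : nat) :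
  j <= m -> m <= M -> M <= N -> 0 < d -> d <= m - j ->
  (INR 'C(M, j) <= INR 'C(m, j) * (INR N / INR d) ^ j)%R.
Proof.
move=> hjm hmM hMN hd hdm.
have hn : 'C(M, j) * d ^ j <= 'C(m, j) * N ^ j.
  apply: leq_trans (_ : 'C(M, j) * (m - j) ^ j <= _); first by rewrite leq_mul ?leq_expn2r.
  by apply: leq_trans (bin_ffact_ratio_le hjm hmM) _; rewrite leq_mul ?leq_expn2r.
have := INR_leq hn; rewrite !mult_INR !INR_expn => h.
have dj : (0 < INR d ^ j)%R by apply/pow_lt/INR_gt0.
rewrite /Rdiv Rpow_mult_distr pow_inv -Rmult_assoc -/(Rdiv _ _).
by apply/Rle_div_r.
Qed.

Lemma pow_one_minus_le_fifth (t : R) (k : nat) :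
  (0 <= t <= 1)%R -> (4 <= INR k * t)%R -> ((1 - t) ^ k <= / 5)%R.
Proof.
move=> ht hk; have := @pow_le_exp (- t)%R k ltac:(lra); rewrite -/(Rminus 1 t) => h.
apply: Rle_trans h _.
rewrite Ropp_mult_distr_r_reverse exp_Ropp; apply: Rinv_le_contravar; first lra.
by have := exp_ineq1_le (INR k * t); lra.
Qed.

Lemma bin_subn_le_fifth (n r a : nat) : a <= n -> 0 < n -> 4 * n <= r * a ->
  (INR 'C(n - a, r) <= INR 'C(n, r) / 5)%R.
Proof.
move=> han hn hra.
have np : (0 < INR n)%R by exact: INR_gt0.
have := INR_leq (bin_ffact_ratio_ge r (leq_subr a n)).
rewrite !mult_INR !INR_expn minus_INR; last exact/leP.
have -> : (INR n - INR a = INR n * (1 - INR a / INR n))%R by field; lra.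
rewrite Rpow_mult_distr => h.
have hfifth : ((1 - INR a / INR n) ^ r <= / 5)%R.
  apply: pow_one_minus_le_fifth.
    split; first by apply: Rdiv_le_0_compat => //; exact: pos_INR.
    by rewrite -Rdiv_le_1 //; exact: INR_leq.
  have := INR_leq hra; rewrite !mult_INR; simpl (INR 4) => h4.
  by rewrite /Rdiv -Rmult_assoc -Rle_div_r //; lra.
have nr : (0 < INR n ^ r)%R by exact: pow_lt.
apply: (Rmult_le_reg_r (INR n ^ r)) => //; apply: Rle_trans h _.
have -> : (INR 'C(n, r) / 5 * INR n ^ r = INR 'C(n, r) * (INR n ^ r * / 5))%R by field.
by apply/Rmult_le_compat_l/Rmult_le_compat_l; [exact: pos_INR | lra |].
Qed.

Lemma ratio_pow_le_exp48 (n r : nat) : 0 < r -> 6 * r <= n -> r * r <= 8 * n ->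
  ((INR n / INR (n - 3 * r)) ^ r <= exp 48)%R.
Proof.
move=> r0 h6 h8.
have hd : (0 < INR (n - 3 * r))%R by apply: INR_gt0; lia.
have -> : (INR n / INR (n - 3 * r) = 1 + INR (3 * r) / INR (n - 3 * r))%R.
  rewrite minus_INR ?mult_INR in hd *; try (apply/leP; lia).
  field; lra.
have h0 : (0 <= 1 + INR (3 * r) / INR (n - 3 * r))%R.
  by have := Rdiv_le_0_compat _ _ (pos_INR (3 * r)) hd; lra.
apply: Rle_trans (pow_le_exp r h0) _.
apply: exp_le_exp; rewrite Rmult_div_assoc -mult_INR Rle_div_l //.
have -> : (48 = INR 48)%R by rewrite INR_IZR_INZ.
rewrite -mult_INR; apply: INR_leq; nia.
Qed.

Section Counting.
Variables n r : nat.
Local Notation T := 'I_n.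

Lemma cardsC_ord (A : {set T}) : #|~: A| = n - #|A|.
Proof. by have := cardsC A; rewrite card_ord; lia. Qed.

Lemma card_rsets_mem (x : T) : 0 < r ->
  #|[set S : {set T} | (#|S| == r) && (x \in S)]| = 'C(n.-1, r.-1).
Proof.
move=> r0.
have -> : n.-1 = #|[set~ x]| by rewrite cardsC1 card_ord.
rewrite -cards_draws.
have xN : forall U : {set T}, U \subset [set~ x] -> x \notin U.
  by move=> U sU; apply/negP => /(subsetP sU); rewrite !inE eqxx.
have -> : [set S : {set T} | (#|S| == r) && (x \in S)] =
   (fun U => x |: U) @: [set U : {set T} | U \subset [set~ x] & #|U| == r.-1].
  apply/setP => S; rewrite inE; apply/andP/imsetP.
  - move=> [/eqP hS xS]; exists (S :\ x); last by rewrite setD1K.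
    rewrite inE; apply/andP; split.
      by apply/subsetP => y; rewrite !inE => /andP[].
    by have := cardsD1 x S; rewrite xS hS add1n => ->.
  - move=> [U]; rewrite inE => /andP[sU /eqP cU] ->.
    by rewrite cardsU1 (xN U sU) cU add1n prednK // setU11.
apply: card_in_imset => U V; rewrite !inE => /andP[sU _] /andP[sV _] e.
by rewrite -(setU1K (xN U sU)) e setU1K // xN.
Qed.

Lemma card_rsets_disjoint (A : {set T}) :
  #|[set S : {set T} | (#|S| == r) && (S :&: A == set0)]| = 'C(n - #|A|, r).
Proof.
rewrite -cardsC_ord -cards_draws; apply: eq_card => S; rewrite !inE andbC.
by rewrite setI_eq0 disjoints_subset.
Qed.

Lemma sum_card_rsetsI (X : {set T}) : 0 < r ->
  \sum_(S in [set S : {set T} | #|S| == r]) #|S :&: X| = #|X| * 'C(n.-1, r.-1).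
Proof.
move=> r0.
have e : forall S : {set T}, #|S :&: X| = \sum_(x in X) (x \in S : nat).
  move=> S; rewrite -sum1_card big_mkcond /= [RHS]big_mkcond /=.
  by apply: eq_bigr => x _; rewrite !inE; case: (x \in X); case: (x \in S).
under eq_bigr => S _ do rewrite e.
rewrite exchange_big /= -sum_nat_const; apply: eq_bigr => x _.
rewrite -(card_rsets_mem x r0) -sum1_card big_mkcond /= [RHS]big_mkcond /=.
by apply: eq_bigr => S _; rewrite !inE; case: (#|S| == r); case: (x \in S).
Qed.

Lemma setU1I_complement (A U : {set T}) (x : T) :
  x \in A -> U \subset ~: A -> (x |: U) :&: A = [set x].
Proof.
move=> xA sU; apply/setP => z; rewrite !inE.
case: eqVneq => [->|_] //=; apply/andP => -[zU zA].
by move: (subsetP sU z zU); rewrite inE zA.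
Qed.

Lemma notin_subset_complement (A U : {set T}) (x : T) :
  x \in A -> U \subset ~: A -> x \notin U.
Proof. by move=> xA sU; apply/negP => /(subsetP sU); rewrite inE xA. Qed.

Lemma card_rsets_meet_ge (A : {set T}) : 1 < r ->
  #|A| * 'C(n - #|A|, r.-1) <=
  #|[set S : {set T} | [&& #|S| == r, S != A & S :&: A != set0]]|.
Proof.
move=> r1.
set D := setX A [set U : {set T} | U \subset ~: A & #|U| == r.-1].
have -> : #|A| * 'C(n - #|A|, r.-1) = #|D| by rewrite cardsX cards_draws cardsC_ord.
have injf : {in D &, injective (fun p : T * {set T} => p.1 |: p.2)}.
  move=> [x U] [y V]; rewrite !inE /= => /andP[xA /andP[sU _]] /andP[yA /andP[sV _]] e.
  have exy : x = y.
    by apply/set1_inj; rewrite -(setU1I_complement xA sU) -(setU1I_complement yA sV) e.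
  subst y; congr (_, _).
  by rewrite -(setU1K (notin_subset_complement xA sU)) e setU1K // (notin_subset_complement xA sV).
rewrite -(card_in_imset injf); apply/subset_leq_card/subsetP => S.
move=> /imsetP[[x U]]; rewrite !inE /= => /andP[xA /andP[sU /eqP cU]] ->.
rewrite cardsU1 (notin_subset_complement xA sU) cU add1n prednK ?(ltnW r1) // eqxx /=.
rewrite (setU1I_complement xA sU) -card_gt0 cards1 andbT.
have : 0 < #|U| by rewrite cU -ltnS prednK // ltnW.
rewrite card_gt0 => /set0Pn[u uU]; apply/eqP => e.
by move: (subsetP sU u uU); rewrite inE -e !inE uU orbT.
Qed.

Lemma card_rsets_meet2_ge (A B : {set T}) : 1 < r -> [disjoint A & B] ->
  #|A| * #|B| * 'C(n - #|A| - #|B|, r.-2) <=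
  #|[set S : {set T} | [&& #|S| == r, S :&: A != set0 & S :&: B != set0]]|.
Proof.
move=> r1 dAB.
set D := setX (setX A B) [set U : {set T} | U \subset ~: (A :|: B) & #|U| == r.-2].
have -> : #|A| * #|B| * 'C(n - #|A| - #|B|, r.-2) = #|D|.
  rewrite !cardsX cards_draws cardsC_ord cardsU.
  by move: dAB; rewrite -setI_eq0 => /eqP ->; rewrite cards0 subn0 subnDA.
have key : forall x y (U : {set T}), x \in A -> y \in B -> U \subset ~: (A :|: B) ->
    [/\ (x |: (y |: U)) :&: A = [set x], (x |: (y |: U)) :&: B = [set y],
        x \notin y |: U & y \notin U].
  move=> x y U xA yB sU.
  have sUA : U \subset ~: A by apply: subset_trans sU _; rewrite setCS subsetUl.
  have sUB : U \subset ~: B by apply: subset_trans sU _; rewrite setCS subsetUr.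
  have yA : y \in ~: A by rewrite inE (disjointFl dAB yB).
  have xB : x \in ~: B by rewrite inE (disjointFr dAB xA).
  have syUA : y |: U \subset ~: A by rewrite subUset sub1set yA.
  have sxUB : x |: U \subset ~: B by rewrite subUset sub1set xB.
  split.
  - exact: setU1I_complement.
  - by rewrite setUCA; apply: setU1I_complement.
  - exact: notin_subset_complement syUA.
  - exact: notin_subset_complement sUB.
have injf : {in D &, injective (fun p : T * T * {set T} => p.1.1 |: (p.1.2 |: p.2))}.
  move=> [[x y] U] [[x' y'] V]; rewrite !inE /=.
  move=> /andP[/andP[xA yB] /andP[sU _]] /andP[/andP[xA' yB'] /andP[sV _]] e.
  have [hA hB xn yn] := key x y U xA yB sU.
  have [hA' hB' xn' yn'] := key x' y' V xA' yB' sV.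
  have ex : x = x' by apply/set1_inj; rewrite -hA -hA' e.
  have ey : y = y' by apply/set1_inj; rewrite -hB -hB' e.
  subst x' y'.
  by rewrite -(setU1K yn) -(setU1K xn) e !setU1K.
rewrite -(card_in_imset injf); apply/subset_leq_card/subsetP => S.
move=> /imsetP[[[x y] U]]; rewrite !inE /= => /andP[/andP[xA yB] /andP[sU /eqP cU]] ->.
have [-> -> xn yn] := key x y U xA yB sU.
rewrite cardsU1 xn cardsU1 yn cU !add1n (_ : (r.-2).+2 = r); last by lia.
by rewrite eqxx -!card_gt0 !cards1.
Qed.

End Counting.

Lemma card_setU3_le (T : finType) (A B C : {set T}) :
  #|A :|: B :|: C| <= #|A| + #|B| + #|C|.
Proof.
apply: leq_trans (leq_card_setU _ _).1 _; rewrite leq_add2r.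
exact: (leq_card_setU _ _).1.
Qed.

Lemma mem_rsets n r (S : {set 'I_n}) : (S \in rsets n r) = (#|S| == r).
Proof. by rewrite mem_enum. Qed.

Lemma mem_avail n r (F : seq {set 'I_n}) e :
  (e \in avail r F) =
  [&& #|e| == r, e \notin F & all (fun f : {set 'I_n} => e :&: f != set0) F].
Proof. by rewrite mem_filter mem_rsets andbC andbA. Qed.

Lemma uniq_avail n r (F : seq {set 'I_n}) : uniq (avail r F).
Proof. exact/filter_uniq/enum_uniq. Qed.

Lemma size_rsets n r : size (rsets n r) = 'C(n, r).
Proof.
rewrite /rsets -cardE -[in RHS](card_ord n) -card_draws.
by apply: eq_card => S; rewrite !inE.
Qed.

Lemma card_leq_size (T : finType) (X : {set T}) (l : seq T) :
  {subset X <= l} -> #|X| <= size l.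
Proof.
move=> H; rewrite cardE; apply: uniq_leq_size; first exact: enum_uniq.
by move=> x; rewrite mem_enum => /H.
Qed.

Lemma leq_sum_seq_set (T : finType) (l : seq T) (X : {set T}) (f : T -> nat) :
  uniq l -> {subset l <= X} -> \sum_(x <- l) f x <= \sum_(x in X) f x.
Proof.
move=> ul sl; rewrite big_uniq // [X in _ <= X](bigID (fun x => x \in l)) /=.
apply: leq_trans (leq_addr _ _); rewrite [X in _ <= X](eq_bigl (fun x => x \in l)) // => x.
by case xl: (x \in l); rewrite ?andbT ?andbF // (sl x xl).
Qed.

Lemma count_leq_sum (T : Type) (l : seq T) (p : pred T) (f : T -> nat) :
  (forall x, p x -> 0 < f x) -> count p l <= \sum_(x <- l) f x.
Proof.
move=> H; elim: l => [|a l IH] /=; first by rewrite big_nil.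
by rewrite big_cons leq_add //; case pa: (p a) => //; apply: H.
Qed.

Section ThirdEdge.
Variables n r : nat.
Hypothesis r_gt1 : 1 < r.
Hypothesis r_small : 6 * r <= n.
Local Notation T := 'I_n.

Definition pr_e3_meets (e1 e2 : {set T}) : R :=
  sumR (avail r [:: e1; e2]) (fun e3 =>
    / INR (size (avail r [:: e1; e2])) * (if e1 :&: e2 :&: e3 != set0 then 1 else 0))%R.

Definition cross_sets (e1 e2 : {set T}) : {set {set T}} :=
  [set S : {set T} | [&& #|S| == r, S :&: (e1 :\: e2) != set0 & S :&: (e2 :\: e1) != set0]].

Definition meeting_sets (e1 : {set T}) : {set {set T}} :=
  [set S : {set T} | [&& #|S| == r, S != e1 & S :&: e1 != set0]].

Lemma pr_e3_meets_le1 (e1 e2 : {set T}) : (pr_e3_meets e1 e2 <= 1)%R.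
Proof. by rewrite /pr_e3_meets sumR_mull sumR_indicator; apply/avg_le1/count_size. Qed.

Lemma cross_sets_sub_avail (e1 e2 : {set T}) :
  {subset cross_sets e1 e2 <= avail r [:: e1; e2]}.
Proof.
have meetW : forall S A B : {set T}, A \subset B -> S :&: A != set0 -> S :&: B != set0.
  by move=> S A B sAB; rewrite !setI_eq0; apply: contra; apply: disjointWr.
move=> S; rewrite inE mem_avail => /and3P[-> h12 h21] /=.
rewrite !inE /= andbT !negb_or.
rewrite (meetW _ _ _ (subsetDl e1 e2) h12) (meetW _ _ _ (subsetDl e2 e1) h21) !andbT.
by apply/andP; split; [move: h21 | move: h12];
  apply: contraNneq => ->; rewrite setDE setICA setICr setI0.
Qed.

Lemma meeting_sets_sub_avail (e1 : {set T}) : {subset meeting_sets e1 <= avail r [:: e1]}.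
Proof. by move=> S; rewrite inE mem_avail => /and3P[-> h1 h2]; rewrite /= !inE h1 h2. Qed.

Lemma mul_bin_pred : n * 'C(n.-1, r.-1) = r * 'C(n, r).
Proof. by rewrite mul_bin_diag prednK // (ltnW r_gt1). Qed.

(* Each [e3] meeting [I := e1 :&: e2] is counted by some point of [I], and
   a point lies in ['C(n.-1, r.-1)] of the [r]-sets. *)
Lemma pr_e3_meets_le (e1 e2 : {set T}) : 0 < #|cross_sets e1 e2| ->
  (pr_e3_meets e1 e2 <=
     INR (#|e1 :&: e2| * 'C(n.-1, r.-1)) / INR #|cross_sets e1 e2|)%R.
Proof.
move=> Gp; rewrite /pr_e3_meets sumR_mull sumR_indicator.
set l := avail r _; set I := e1 :&: e2.
have hcount : count (fun e3 => I :&: e3 != set0) l <= #|I| * 'C(n.-1, r.-1).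
  apply: leq_trans (_ : \sum_(e3 <- l) #|e3 :&: I| <= _).
    by apply: count_leq_sum => S; rewrite card_gt0 setIC.
  rewrite -sum_card_rsetsI ?(ltnW r_gt1) //; apply: leq_sum_seq_set; first exact: uniq_avail.
  by move=> S; rewrite mem_avail !inE => /andP[-> _].
have hsize : #|cross_sets e1 e2| <= size l by apply/card_leq_size/cross_sets_sub_avail.
have GpR := INR_gt0 Gp.
rewrite Rmult_comm; apply: Rmult_le_compat; first exact: pos_INR.
- by apply/Rlt_le/Rinv_0_lt_compat; apply: INR_gt0; apply: leq_trans hsize.
- exact: INR_leq.
- by apply: Rinv_le_contravar => //; exact: INR_leq.
Qed.

Lemma sum_overlap_le (e1 : {set T}) : #|e1| = r ->
  \sum_(e2 <- avail r [:: e1]) #|e1 :&: e2| <= r * 'C(n.-1, r.-1).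
Proof.
move=> c1; rewrite -[X in X * _]c1 -sum_card_rsetsI ?(ltnW r_gt1) //.
under eq_bigr => e2 _ do rewrite setIC.
apply: leq_sum_seq_set; first exact: uniq_avail.
by move=> S; rewrite mem_avail !inE => /andP[-> _].
Qed.

(* Overlaps [k] above [r/2] are handled by the trivial bound
   [pr_e3_meets <= 1 <= 2 k / r]. *)
Lemma pr_given_e1_le (e1 : {set T}) (h W : R) : (0 <= h)%R -> (0 <= W)%R ->
  (forall e2, e2 \in avail r [:: e1] -> 2 * #|e1 :&: e2| <= r ->
     (pr_e3_meets e1 e2 <= INR #|e1 :&: e2| * h)%R) ->
  (INR (\sum_(e2 <- avail r [:: e1]) #|e1 :&: e2|) <= W * INR (size (avail r [:: e1])))%R ->
  (sumR (avail r [:: e1]) (fun e2 => / INR (size (avail r [:: e1])) * pr_e3_meets e1 e2)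
     <= (2 / INR r + h) * W)%R.
Proof.
move=> h0 W0 Hsmall Hsum; set l := avail r [:: e1]; set c := (2 / INR r + h)%R.
have rp : (0 < INR r)%R by apply: INR_gt0; apply: ltnW.
have d0 : (0 <= 2 / INR r)%R by apply: Rdiv_le_0_compat; lra.
have hpr : forall e2, e2 \in l -> (pr_e3_meets e1 e2 <= c * INR #|e1 :&: e2|)%R.
  move=> e2 he2; have k0 := pos_INR #|e1 :&: e2|.
  case: (leqP (2 * #|e1 :&: e2|) r) => hk.
    by apply: Rle_trans (Hsmall e2 he2 hk) _; rewrite /c; nra.
  apply: Rle_trans (pr_e3_meets_le1 e1 e2) _.
  have hr : (INR r <= 2 * INR #|e1 :&: e2|)%R by have := INR_leq (ltnW hk); rewrite mult_INR.
  have : (1 <= 2 / INR r * INR #|e1 :&: e2|)%R.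
    by rewrite Rmult_comm Rmult_div_assoc -Rle_div_r //; lra.
  by rewrite /c; nra.
rewrite sumR_mull; have := sumR_le hpr; rewrite sumR_mull sumR_INR => hle.
case: (posnP (size l)) => [->|sp]; first by rewrite Rinv_0 Rmult_0_l /c; nra.
have spR := INR_gt0 sp.
apply: Rle_trans (_ : / INR (size l) * (c * (W * INR (size l))) <= _)%R.
  apply/Rmult_le_compat_l/(Rle_trans _ _ _ hle)/Rmult_le_compat_l => //.
  - exact/Rlt_le/Rinv_0_lt_compat.
  - by rewrite /c; lra.
by right; field; lra.
Qed.

Lemma card_cross_sets_ge (e1 e2 : {set T}) :
  #|e1| = r -> #|e2| = r -> 2 * #|e1 :&: e2| <= r ->
  r * r * 'C(n - 2 * r, r.-2) <= 4 * #|cross_sets e1 e2|.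
Proof.
move=> c1 c2 hk; set k := #|e1 :&: e2|.
have cA : #|e1 :\: e2| = r - k by rewrite cardsD c1.
have cB : #|e2 :\: e1| = r - k by rewrite cardsD c2 setIC.
have dAB : [disjoint e1 :\: e2 & e2 :\: e1].
  rewrite -setI_eq0; apply/eqP/setP => x; rewrite !inE.
  by case: (x \in e1); case: (x \in e2); rewrite ?andbF.
have := card_rsets_meet2_ge r_gt1 dAB; rewrite cA cB => hG.
apply: leq_trans (_ : 4 * ((r - k) * (r - k) * 'C(n - (r - k) - (r - k), r.-2)) <= _).
  by rewrite !mulnA; apply: leq_mul; [nia | apply: leq_bin2l; lia].
by rewrite leq_mul2l; apply/orP; right; exact: hG.
Qed.

Lemma bin_pred_le_exp48 (m j : nat) : r * r <= 8 * n ->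
  j <= r -> m <= n.-1 -> n - 3 * r <= m - j ->
  (INR 'C(n.-1, j) <= INR 'C(m, j) * exp 48)%R.
Proof.
move=> h8 hj hm hd.
have hd0 : (0 < INR (n - 3 * r))%R by apply: INR_gt0; lia.
apply: Rle_trans
  (bin_le_ratio_pow (M := n.-1) (m := m) (j := j) (N := n) (d := n - 3 * r) _ _ _ _ hd) _;
  try lia.
apply/Rmult_le_compat_l; first exact: pos_INR.
apply: Rle_trans (ratio_pow_le_exp48 (ltnW r_gt1) r_small h8).
apply: Rle_pow; last exact/leP.
by rewrite -Rle_div_r // Rmult_1_l; apply: INR_leq; lia.
Qed.

Lemma r_bin_pred_le_sparse : r * r <= 8 * n ->
  (INR r * INR 'C(n.-1, r.-1) <= 2 * exp 48 * INR n * INR 'C(n - 2 * r, r.-2))%R.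
Proof.
move=> h8.
have hnat : r.-1 * 'C(n.-1, r.-1) <= n * 'C(n.-1, r.-2).
  have := mul_bin_left n.-1 r.-2; rewrite (_ : r.-2.+1 = r.-1); last by lia.
  by move=> ->; apply: leq_mul => //; lia.
have hpred : INR r.-1 = (INR r - 1)%R by rewrite -subn1 minus_INR //; apply/leP; lia.
have := INR_leq hnat; rewrite !mult_INR hpred => hC1.
have hCq := @bin_pred_le_exp48 (n - 2 * r) r.-2 h8 ltac:(lia) ltac:(lia) ltac:(lia).
have r2 : (2 <= INR r)%R by have := INR_leq r_gt1.
have := pos_INR 'C(n.-1, r.-1); have := pos_INR n; have := exp_pos 48; nra.
Qed.

Lemma pr_e3_meets_le_sparse (e1 e2 : {set T}) : r * r <= 8 * n ->
  #|e1| = r -> #|e2| = r -> 2 * #|e1 :&: e2| <= r ->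
  (pr_e3_meets e1 e2 <= INR #|e1 :&: e2| * (8 * exp 48 * INR n / INR r ^ 3))%R.
Proof.
move=> h8 c1 c2 hk.
have hG := card_cross_sets_ge c1 c2 hk.
have Gp : 0 < #|cross_sets e1 e2|.
  have : 0 < r * r * 'C(n - 2 * r, r.-2) by rewrite !muln_gt0 bin_gt0; lia.
  lia.
have GpR := INR_gt0 Gp.
have r0 : (0 < INR r)%R by apply: INR_gt0; lia.
have rp : (0 < INR r ^ 3)%R by exact: pow_lt.
apply: Rle_trans (pr_e3_meets_le Gp) _.
rewrite mult_INR /Rdiv Rmult_assoc; apply: Rmult_le_compat_l; first exact: pos_INR.
rewrite -/(Rdiv _ _) Rle_div_l //.
have -> : (8 * exp 48 * INR n * / INR r ^ 3 * INR #|cross_sets e1 e2| =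
           (8 * exp 48 * INR n * INR #|cross_sets e1 e2|) / INR r ^ 3)%R by field; lra.
rewrite -Rle_div_r //.
have := INR_leq hG; rewrite !mult_INR (INR_IZR_INZ 4) => hGR.
have hC1 := r_bin_pred_le_sparse h8.
have rr : (0 <= INR r * INR r)%R by have := pos_INR r; nra.
have e0 : (0 <= 2 * exp 48 * INR n)%R by have := exp_pos 48; have := pos_INR n; nra.
have -> : (INR 'C(n.-1, r.-1) * INR r ^ 3 =
           INR r * INR r * (INR r * INR 'C(n.-1, r.-1)))%R by ring.
apply: Rle_trans (Rmult_le_compat_l _ _ _ rr hC1) _.
have -> : (INR r * INR r * (2 * exp 48 * INR n * INR 'C(n - 2 * r, r.-2)) =
           2 * exp 48 * INR n * (INR r * INR r * INR 'C(n - 2 * r, r.-2)))%R by ring.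
apply: Rle_trans (Rmult_le_compat_l _ _ _ e0 hGR) _; right; simpl; ring.
Qed.

Lemma sum_overlap_le_sparse (e1 : {set T}) : r * r <= 8 * n -> #|e1| = r ->
  (INR (\sum_(e2 <- avail r [:: e1]) #|e1 :&: e2|)
     <= exp 48 * INR (size (avail r [:: e1])))%R.
Proof.
move=> h8 c1.
have := INR_leq (sum_overlap_le c1); rewrite mult_INR => hsum.
have := card_rsets_meet_ge e1 r_gt1; rewrite c1 => hmeet.
have hsize : r * 'C(n - r, r.-1) <= size (avail r [:: e1]).
  by apply: leq_trans hmeet (card_leq_size (meeting_sets_sub_avail (e1 := e1))).
have := INR_leq hsize; rewrite mult_INR => hsizeR.
have hC1 := @bin_pred_le_exp48 (n - r) r.-1 h8 ltac:(lia) ltac:(lia) ltac:(lia).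
have := pos_INR r; have := exp_pos 48; have := pos_INR 'C(n - r, r.-1); nra.
Qed.

Local Notation rsets_set := [set S : {set T} | #|S| == r].

Lemma card_rsets_set : #|rsets_set| = 'C(n, r).
Proof. by rewrite card_draws card_ord. Qed.

(* An [r]-set avoiding neither [e1 :\: e2] nor [e2 :\: e1] is a cross set, and
   for [8 n < r ^ 2] at most a fifth of the [r]-sets avoids either. *)
Lemma bin_le_card_cross_sets_dense (e1 e2 : {set T}) : 8 * n < r * r ->
  #|e1| = r -> #|e2| = r -> 2 * #|e1 :&: e2| <= r ->
  (INR 'C(n, r) <= 2 * INR #|cross_sets e1 e2|)%R.
Proof.
move=> h8 c1 c2 hk; set k := #|e1 :&: e2|.
set A := e1 :\: e2; set B := e2 :\: e1.
have cA : #|A| = r - k by rewrite cardsD c1.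
have cB : #|B| = r - k by rewrite cardsD c2 setIC.
have cover : rsets_set \subset [set S : {set T} | (#|S| == r) && (S :&: A == set0)] :|:
     [set S : {set T} | (#|S| == r) && (S :&: B == set0)] :|: cross_sets e1 e2.
  apply/subsetP => S; rewrite !inE => cS; rewrite cS /=.
  by case: (S :&: A == set0); case: (S :&: B == set0).
have := leq_trans (subset_leq_card cover) (card_setU3_le (T := {set T}) _ _ _).
rewrite card_rsets_set !card_rsets_disjoint cA cB => /INR_leq; rewrite !plus_INR => hU.
have hfifth : (INR 'C(n - (r - k), r) <= INR 'C(n, r) / 5)%R.
  by apply: bin_subn_le_fifth; nia.
by have := pos_INR #|cross_sets e1 e2|; lra.
Qed.

Lemma bin_le_size_avail_dense (e1 : {set T}) : 8 * n < r * r -> #|e1| = r ->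
  (INR 'C(n, r) <= 2 * INR (size (avail r [:: e1])))%R.
Proof.
move=> h8 c1.
have cover : rsets_set \subset [set S : {set T} | (#|S| == r) && (S :&: e1 == set0)] :|:
     meeting_sets e1 :|: [set e1].
  apply/subsetP => S; rewrite !inE => cS; rewrite cS /=.
  by case: (S :&: e1 == set0); case: (S == e1).
have hsize : #|meeting_sets e1| <= size (avail r [:: e1]).
  exact/card_leq_size/meeting_sets_sub_avail.
have := leq_trans (subset_leq_card cover) (card_setU3_le (T := {set T}) _ _ _).
rewrite card_rsets_set card_rsets_disjoint cards1 c1 => hU.
have := leq_trans hU (leq_add (leq_add (leqnn _) hsize) (leqnn 1)).
move=> /INR_leq; rewrite !plus_INR => hUR.
have hfifth : (INR 'C(n - r, r) <= INR 'C(n, r) / 5)%R by apply: bin_subn_le_fifth; nia.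
have : 1 <= 'C(n - r, r) by rewrite bin_gt0; lia.
move=> /INR_leq h1; have one : INR 1 = 1%R by [].
by have := pos_INR (size (avail r [:: e1])); lra.
Qed.

Lemma pr_e3_meets_le_dense (e1 e2 : {set T}) : 8 * n < r * r ->
  #|e1| = r -> #|e2| = r -> 2 * #|e1 :&: e2| <= r ->
  (pr_e3_meets e1 e2 <= INR #|e1 :&: e2| * (2 * INR r / INR n))%R.
Proof.
move=> h8 c1 c2 hk.
have hG := bin_le_card_cross_sets_dense h8 c1 c2 hk.
have C0 : (0 < INR 'C(n, r))%R by apply: INR_gt0; rewrite bin_gt0; lia.
have Gp : 0 < #|cross_sets e1 e2|.
  by case: (posnP #|cross_sets e1 e2|) => // h0; rewrite h0 /= in hG; lra.
have GpR := INR_gt0 Gp.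
have np : (0 < INR n)%R by apply: INR_gt0; lia.
apply: Rle_trans (pr_e3_meets_le Gp) _.
rewrite mult_INR /Rdiv Rmult_assoc; apply: Rmult_le_compat_l; first exact: pos_INR.
rewrite -/(Rdiv _ _) Rle_div_l //.
have -> : (2 * INR r / INR n * INR #|cross_sets e1 e2| =
           (2 * INR r * INR #|cross_sets e1 e2|) / INR n)%R by field; lra.
have hC1 : (INR 'C(n.-1, r.-1) * INR n = INR r * INR 'C(n, r))%R.
  by have := f_equal INR mul_bin_pred; rewrite !mult_INR; lra.
by rewrite -Rle_div_r // hC1; have := pos_INR r; nra.
Qed.

Lemma sum_overlap_le_dense (e1 : {set T}) : 8 * n < r * r -> #|e1| = r ->
  (INR (\sum_(e2 <- avail r [:: e1]) #|e1 :&: e2|)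
     <= 2 * INR r * INR r / INR n * INR (size (avail r [:: e1])))%R.
Proof.
move=> h8 c1.
have np : (0 < INR n)%R by apply: INR_gt0; lia.
apply: Rle_trans (INR_leq (sum_overlap_le c1)) _.
have hs := bin_le_size_avail_dense h8 c1.
have hC1 : (INR 'C(n.-1, r.-1) * INR n = INR r * INR 'C(n, r))%R.
  by have := f_equal INR mul_bin_pred; rewrite !mult_INR; lra.
have -> : (2 * INR r * INR r / INR n * INR (size (avail r [:: e1])) =
           (2 * INR r * INR r * INR (size (avail r [:: e1]))) / INR n)%R by field; lra.
rewrite mult_INR -Rle_div_r // Rmult_assoc hC1.
by have := pos_INR r; nra.
Qed.

Definition B3_bound : R :=
  ((2 / INR r + 8 * exp 48 * INR n / INR r ^ 3) * exp 48 +
   (2 / INR r + 2 * INR r / INR n) * (2 * INR r * INR r / INR n))%R.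

Lemma pr_given_e1_le_B3_bound (e1 : {set T}) : #|e1| = r ->
  (sumR (avail r [:: e1]) (fun e2 => / INR (size (avail r [:: e1])) * pr_e3_meets e1 e2)
     <= B3_bound)%R.
Proof.
move=> c1.
have rp : (0 < INR r)%R by apply: INR_gt0; lia.
have np : (0 < INR n)%R by apply: INR_gt0; lia.
have r3 : (0 < INR r ^ 3)%R by exact: pow_lt.
have Ep := exp_pos 48.
have d0 : (0 <= 2 / INR r)%R by apply: Rdiv_le_0_compat; lra.
have sparse0 : (0 <= 8 * exp 48 * INR n / INR r ^ 3)%R by apply: Rdiv_le_0_compat; nra.
have dense0 : (0 <= 2 * INR r / INR n)%R by apply: Rdiv_le_0_compat; nra.
have dense0' : (0 <= 2 * INR r * INR r / INR n)%R by apply: Rdiv_le_0_compat; nra.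
rewrite /B3_bound; case: (leqP (r * r) (8 * n)) => h8.
  apply: Rle_trans (_ : (2 / INR r + 8 * exp 48 * INR n / INR r ^ 3) * exp 48 <= _)%R.
    apply: pr_given_e1_le => //; first lra; last exact: sum_overlap_le_sparse.
    move=> e2; rewrite mem_avail => /and3P[/eqP c2 _ _].
    exact: pr_e3_meets_le_sparse.
  by have := Rmult_le_pos _ _ (Rplus_le_le_0_compat _ _ d0 dense0) dense0'; lra.
apply: Rle_trans (_ : (2 / INR r + 2 * INR r / INR n) * (2 * INR r * INR r / INR n) <= _)%R.
  apply: pr_given_e1_le => //; last exact: sum_overlap_le_dense.
  move=> e2; rewrite mem_avail => /and3P[/eqP c2 _ _].
  exact: pr_e3_meets_le_dense.
by have := Rmult_le_pos _ _ (Rplus_le_le_0_compat _ _ d0 sparse0) (Rlt_le _ _ Ep); lra.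
Qed.

Lemma probB3_le : (probB3 n r <= B3_bound)%R.
Proof.
have C0 : (0 < INR (size (rsets n r)))%R.
  by rewrite size_rsets; apply: INR_gt0; rewrite bin_gt0; lia.
rewrite /probB3.
apply: Rle_trans (_ : sumR (rsets n r) (fun _ => / INR (size (rsets n r)) * B3_bound) <= _)%R.
  apply: sumR_le => e1; rewrite mem_rsets => /eqP c1.
  apply: Rmult_le_compat_l; first exact/Rlt_le/Rinv_0_lt_compat.
  exact: pr_given_e1_le_B3_bound.
by rewrite sumR_const; right; field; lra.
Qed.

End ThirdEdge.

Lemma probB3_ge0 n r : (0 <= probB3 n r)%R.
Proof.
apply: sumR_ge0 => e1 _; apply: Rmult_le_pos; first exact: Rinv_INR_ge0.
apply: sumR_ge0 => e2 _; apply: Rmult_le_pos; first exact: Rinv_INR_ge0.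
apply: sumR_ge0 => e3 _; apply: Rmult_le_pos; first exact: Rinv_INR_ge0.
by case: (_ != _); lra.
Qed.

Lemma Rpower_third (n : nat) : 0 < n ->
  let x := Rpower (INR n) (1 / 3) in
  [/\ (1 <= x)%R, INR n = (x ^ 3)%R & Rpower (INR n) (2 / 3) = (x ^ 2)%R].
Proof.
move=> n0 x.
have np : (0 < INR n)%R by exact: INR_gt0.
have xp : (0 < x)%R by exact: exp_pos.
have e3 : INR n = (x ^ 3)%R.
  by rewrite /x -Rpower_pow // Rpower_mult (_ : 1 / 3 * INR 3 = 1)%R ?Rpower_1 //=; field.
split => //.
- case: (Rle_or_lt 1 x) => // hx; have := INR_leq n0; rewrite e3 /=; nra.
- by rewrite /x -Rpower_pow // Rpower_mult (_ : 1 / 3 * INR 2 = 2 / 3)%R //=; field.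
Qed.

Definition B3_const : R := 2 * exp 48 + 8 * exp 48 * exp 48.

(* With [n = x ^ 3], [r = rho x = sig x ^ 2], the four terms of [B3_bound] are
   [O(1 / (rho x))], [O(1 / rho ^ 3)], [O(sig / x)] and [O(sig ^ 3)]. *)
Lemma B3_bound_le_scaled (n r : nat) (x rho sig : R) :
  (1 <= x)%R -> INR n = (x ^ 3)%R -> INR r = (rho * x)%R -> INR r = (sig * x ^ 2)%R ->
  (1 <= rho)%R -> (0 <= sig <= 1)%R ->
  (B3_bound n r <= B3_const / rho + 8 * sig)%R.
Proof.
move=> x1 en er1 er2 rho1 sig01.
have rp : (0 < INR r)%R by rewrite er1; nra.
have np : (0 < INR n)%R by rewrite en; apply: pow_lt; lra.
have Ep := exp_pos 48.
have -> : B3_bound n r = (2 * exp 48 * (1 / INR r) + 8 * exp 48 * exp 48 * (INR n / INR r ^ 3)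
    + 4 * (INR r / INR n) + 4 * (INR r ^ 3 / (INR n ^ 2)))%R.
  by rewrite /B3_bound; field; lra.
have ha : (1 / INR r <= 1 / rho)%R.
  by apply/Rmult_le_compat_l/Rinv_le_contravar; [lra | lra | rewrite er1; nra].
have hb : (INR n / INR r ^ 3 <= 1 / rho)%R.
  have -> : (INR n / INR r ^ 3 = 1 / (rho ^ 3))%R by rewrite en er1; field; lra.
  apply/Rmult_le_compat_l/Rinv_le_contravar; [lra | lra |].
  have rho2 : (1 <= rho * rho)%R by nra.
  by rewrite /=; nra.
have hc : (INR r / INR n <= sig)%R.
  rewrite (_ : INR r / INR n = sig / x)%R; last by rewrite er2 en; field; lra.
  by rewrite Rle_div_l; nra.
have hd : (INR r ^ 3 / INR n ^ 2 <= sig)%R.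
  rewrite (_ : INR r ^ 3 / INR n ^ 2 = sig ^ 3)%R; last by rewrite er2 en; field; lra.
  have sig2 : (sig * sig <= 1)%R by nra.
  by rewrite /=; nra.
rewrite /B3_const (_ : (2 * exp 48 + 8 * exp 48 * exp 48) / rho =
   2 * exp 48 * (1 / rho) + 8 * exp 48 * exp 48 * (1 / rho))%R; last by field; lra.
have E2 : (0 < 8 * exp 48 * exp 48)%R by nra.
nra.
Qed.

Lemma probB3_le_scaled (n r : nat) (rho sig : R) : 0 < n ->
  rho = (INR r / Rpower (INR n) (1 / 3))%R -> sig = (INR r / Rpower (INR n) (2 / 3))%R ->
  (2 <= rho)%R -> (0 <= sig < 1 / 6)%R -> (probB3 n r <= B3_const / rho + 8 * sig)%R.
Proof.
move=> n0 erho esig rho2 sig6.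
have [x1 en ex2] := Rpower_third n0.
rewrite ex2 in esig; set x := Rpower (INR n) (1 / 3) in x1 en erho esig.
have er1 : INR r = (rho * x)%R by rewrite erho; field; lra.
have er2 : INR r = (sig * x ^ 2)%R by rewrite esig; field; lra.
have r_gt1 : 1 < r.
  have : (INR 1 < INR r)%R by rewrite er1 /=; nra.
  by move/INR_lt/ltP.
have r_small : 6 * r <= n.
  have : (INR (6 * r) <= INR n)%R.
    rewrite mult_INR en er2 /=.
    have sxx : (0 <= sig * (x * x))%R by apply: Rmult_le_pos; nra.
    nra.
  by move/INR_le/leP.
apply: Rle_trans (probB3_le r_gt1 r_small) _.
by apply: B3_bound_le_scaled en er1 er2 _ _ => //; lra.
Qed.

Theorem lemma7 (r : nat -> nat) :
  (forall M : R, exists N : nat, forall n : nat, (N <= n)%coq_nat ->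
      (M < INR (r n) / Rpower (INR n) (1 / 3))%R) ->
  Un_cv (fun n => (INR (r n) / Rpower (INR n) (2 / 3))%R) 0%R ->
  Un_cv (fun n => probB3 n (r n)) 0%R.
Proof.
move=> rho_big sig_small eps eps0.
have c0 : (0 < B3_const)%R by rewrite /B3_const; have := exp_pos 48; nra.
have [N1 hN1] := rho_big (2 + 2 * B3_const / eps)%R.
have delta0 : (0 < Rmin (1 / 6) (eps / 16))%R by apply: Rmin_pos; lra.
have [N2 hN2] := sig_small _ delta0.
exists (maxn (maxn N1 N2) 1) => n /leP hn.
set rho := (INR (r n) / Rpower (INR n) (1 / 3))%R.
set sig := (INR (r n) / Rpower (INR n) (2 / 3))%R.
have hrho : (2 + 2 * B3_const / eps < rho)%R by apply: hN1; apply/leP; lia.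
have sig0 : (0 <= sig)%R by apply: Rdiv_le_0_compat; [exact: pos_INR | exact: exp_pos].
have hsig : (sig < Rmin (1 / 6) (eps / 16))%R.
  by have := hN2 n ltac:(apply/leP; lia); rewrite /R_dist Rminus_0_r Rabs_pos_eq.
have := Rmin_l (1 / 6) (eps / 16); have := Rmin_r (1 / 6) (eps / 16) => h16 h6.
have t0 : (0 <= 2 * B3_const / eps)%R by apply: Rdiv_le_0_compat; lra.
have hc : (B3_const / rho < eps / 2)%R.
  have hr : (2 * B3_const < rho * eps)%R by rewrite -Rlt_div_l //; lra.
  rewrite Rlt_div_l; lra.
have := @probB3_le_scaled n (r n) rho sig ltac:(lia) erefl erefl ltac:(lra) ltac:(lra).
rewrite /R_dist Rminus_0_r Rabs_pos_eq; [lra | exact: probB3_ge0].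
Qed.
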